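(* Let $a$ and $b$ be relatively prime integers with $1<a<b$, let $(u,v)$ be the definitely least solution of $ax+by=1$, and let $S=\langle a,b\rangle$. If $I_{i,a}(S)\neq\varnothing$ for some $i\in\{1,\dots,a-1\}$ and $h_i=\min I_{i,a}(S)$, then $I_{i,a}(S)=\{h_i,h_i+a,\dots,h_i+(|u|-1)a\}$.
   Context: $\langle a,b\rangle=\{\lambda_1a+\lambda_2b:\lambda_1,\lambda_2\in\mathbb{N}\}$. $I(S)$ is the set of isolated gaps of $S$ ($x\in\mathbb{N}\setminus S$ with $x-1,x+1\in S$), and $I_{i,a}(S)=\{s\in I(S):s\equiv i\pmod a\}$. The definitely least solution $(u,v)$ of $ax+by=1$ is the unique integer solution with $|u|,|v|$ minimal; equivalently the one with $|u|\le b/2$, $|v|\le a/2$. *)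

From mathcomp Require Import all_boot all_order all_algebra.
Set Implicit Arguments. Unset Strict Implicit. Unset Printing Implicit Defensive.

Definition in_sg2 (a b x : nat) : Prop := exists l1 l2 : nat, x = l1 * a + l2 * b.

(* Isolated gaps of <a,b>: x not in S with x-1 and x+1 in S (x >= 1 so x-1 is a genuine natural). *)
Definition isolated_gap (a b x : nat) : Prop :=
  0 < x /\ ~ in_sg2 a b x /\ in_sg2 a b x.-1 /\ in_sg2 a b x.+1.

Definition I_ia (a b i x : nat) : Prop := isolated_gap a b x /\ x = i %[mod a].

Definition def_least_sol (a b : nat) (u v : int) : Prop :=
  (a%:Z * u + b%:Z * v = 1)%R /\ (2 * `|u| <= b)%N /\ (2 * `|v| <= a)%N.

From mathcomp Require Import all_boot all_order all_algebra.
From mathcomp Require Import zify.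

(* Every residue class mod a has a least element J b of S (with J < a), and x lies in S
   iff x is at least the element of its class.  Fix t with t b = 1 + a m and 0 < t < a;
   then the classes of x + 1 and x - 1 have least elements (J + t) b and (J - t) b,
   corrected by -/+ a b when the index J +/- t leaves [0, a).  Writing x = J b - k a,
   x is an isolated gap iff a <= J + t, t <= J (conditions on the class only) and
   1 <= k <= min(m, b - m).  The least gap of the class is the one with k maximal, and
   min(m, b - m) = |u| because the solutions of a x + b y = 1 are (s b - m, t - s a). *)

Set Implicit Arguments.
Unset Strict Implicit.
Unset Printing Implicit Defensive.

Lemma eq_modn_addM (a x y p q : nat) : x + p * a = y + q * a -> x = y %[mod a].
Proof. by move=> e; rewrite -(modnMDl p) addnC e addnC modnMDl. Qed.

Section Apery.

Variables a b : nat.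
Hypotheses (a_gt0 : 0 < a) (coprime_ab : coprime a b).

Lemma in_sg2_apery (j x : nat) :
  j < a -> j * b = x %[mod a] -> in_sg2 a b x <-> j * b <= x.
Proof.
move=> j_lt_a jb_x; split=> [[l1 [l2 x_eq]]|jb_le_x].
- have [j_le_l2|l2_lt_j] := leqP j l2.
    by rewrite x_eq; apply: leq_trans (leq_addl _ _); rewrite leq_mul2r j_le_l2 orbT.
  have : a %| (j - l2) * b.
    rewrite mulnBl -eqn_mod_dvd; last by rewrite leq_mul2r (ltnW l2_lt_j) orbT.
    by rewrite jb_x x_eq modnMDl.
  rewrite Gauss_dvdl // => /dvdn_leq; lia.
- have /divnK dv : a %| x - j * b by rewrite -eqn_mod_dvd // jb_x.
  by exists ((x - j * b) %/ a), j; lia.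
Qed.

Section IsolatedGaps.

Variables t m : nat.
Hypotheses (t_gt0 : 0 < t) (t_lt_a : t < a) (tb_eq : t * b = 1 + a * m).

Lemma m_lt_b : m < b.
Proof. by rewrite -(ltn_pmul2l a_gt0); nia. Qed.

Section Offset.

Variables J x k : nat.
Hypotheses (J_lt_a : J < a) (x_eq : x + k * a = J * b).

Lemma in_sg2_offset : in_sg2 a b x <-> k = 0.
Proof.
have Jb_x : J * b = x %[mod a] by apply: (@eq_modn_addM _ _ _ 0 k); lia.
by rewrite (in_sg2_apery J_lt_a Jb_x); nia.
Qed.

Lemma in_sg2_offset_succ : 0 < k -> in_sg2 a b x.+1 <-> a <= J + t /\ k <= b - m.
Proof.
move=> k_gt0.
have mb := m_lt_b.
have [Jt_lt_a|a_le_Jt] := ltnP (J + t) a.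
- rewrite (@in_sg2_apery (J + t)) //; first nia.
  by apply: (@eq_modn_addM _ _ _ 0 (k + m)); nia.
- rewrite (@in_sg2_apery (J + t - a)); [nia | lia |].
  by apply: (@eq_modn_addM _ _ _ b (k + m)); nia.
Qed.

Lemma in_sg2_offset_pred : 0 < k -> 0 < x -> in_sg2 a b x.-1 <-> t <= J /\ k <= m.
Proof.
move=> k_gt0 x_gt0.
have mb := m_lt_b.
have [J_lt_t|t_le_J] := ltnP J t.
- rewrite (@in_sg2_apery (J + a - t)); [nia | lia |].
  by apply: (@eq_modn_addM _ _ _ m (k + b)); nia.
- rewrite (@in_sg2_apery (J - t)); [nia | lia |].
  by apply: (@eq_modn_addM _ _ _ m k); nia.
Qed.

End Offset.

Lemma isolated_gapP (J x : nat) : J < a -> J * b = x %[mod a] ->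
  isolated_gap a b x <->
  [/\ a <= J + t, t <= J & exists2 k, 0 < k <= minn m (b - m) & x + k * a = J * b].
Proof.
move=> J_lt_a Jb_x; split.
- case=> x_gt0 [x_notin [pred_in succ_in]].
  have x_lt_Jb : x < J * b.
    by rewrite ltnNge; apply/negP => /(in_sg2_apery J_lt_a Jb_x).
  have /divnK k_eq : a %| J * b - x by rewrite -eqn_mod_dvd ?Jb_x // ltnW.
  set k := (J * b - x) %/ a in k_eq.
  have x_eq : x + k * a = J * b by lia.
  have k_gt0 : 0 < k.
    by rewrite lt0n; apply/eqP => /(in_sg2_offset J_lt_a x_eq).
  have [Jt_ge_a k_le_bm] := iffLR (in_sg2_offset_succ J_lt_a x_eq k_gt0) succ_in.
  have [J_ge_t k_le_m] := iffLR (in_sg2_offset_pred J_lt_a x_eq k_gt0 x_gt0) pred_in.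
  by split=> //; exists k; rewrite // k_gt0 leq_min k_le_m.
- case=> Jt_ge_a J_ge_t [k /andP[k_gt0]]; rewrite leq_min => /andP[k_le_m k_le_bm] x_eq.
  have x_gt0 : 0 < x by nia.
  split=> //; split; first by move/(in_sg2_offset J_lt_a x_eq); lia.
  split; first exact/(in_sg2_offset_pred J_lt_a x_eq k_gt0 x_gt0).
  exact/(in_sg2_offset_succ J_lt_a x_eq k_gt0).
Qed.

Section ResidueClass.

Variables i J : nat.
Hypotheses (J_lt_a : J < a) (Jb_i : J * b = i %[mod a]).

Lemma I_iaP (x : nat) : a <= J + t -> t <= J ->
  I_ia a b i x <-> exists2 k, 0 < k <= minn m (b - m) & x + k * a = J * b.
Proof.
move=> Jt_ge_a J_ge_t; split=> [[gap x_i]|[k k_range x_eq]].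
- by case/(isolated_gapP J_lt_a (etrans Jb_i (esym x_i))): gap.
- have x_i : x = i %[mod a] by rewrite -Jb_i; apply: (@eq_modn_addM _ _ _ k 0); lia.
  split=> //; apply/(isolated_gapP J_lt_a (etrans Jb_i (esym x_i))).
  by split=> //; exists k.
Qed.

Lemma I_ia_progression (h : nat) : I_ia a b i h -> (forall x, I_ia a b i x -> h <= x) ->
  forall x, I_ia a b i x <-> exists2 k, k < minn m (b - m) & x = h + k * a.
Proof.
move=> h_in h_min.
have [[Jt_ge_a J_ge_t _]] := iffLR (isolated_gapP J_lt_a (etrans Jb_i (esym h_in.2))) h_in.1.
set n := minn m (b - m).
have mb := m_lt_b.
have n_le_m : n <= m by rewrite geq_minl.
have [kh /andP[kh_gt0 kh_le_n] h_eq] := iffLR (I_iaP h Jt_ge_a J_ge_t) h_in.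
have least_in : I_ia a b i (J * b - n * a).
  by apply/(I_iaP _ Jt_ge_a J_ge_t); exists n; rewrite ?leqnn ?andbT; nia.
have kh_eq : kh = n by have := h_min _ least_in; nia.
move=> x; rewrite (I_iaP x Jt_ge_a J_ge_t); split=> [[k /andP[k_gt0 k_le_n] x_eq]|[k k_lt_n ->]].
- by exists (n - k); nia.
- by exists (n - k); nia.
Qed.

End ResidueClass.

End IsolatedGaps.

End Apery.

Lemma def_least_sol_minn (a b : nat) (u v : int) : 1 < a -> a < b ->
  def_least_sol a b u v ->
  exists t m, [/\ 0 < t < a, t * b = 1 + a * m & minn m (b - m) = `|u|%N].
Proof.
move=> a_gt1 a_lt_b [uv_eq [u_le v_le]].
case: u uv_eq u_le => p uv_eq u_le; case: v uv_eq v_le => w uv_eq v_le.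
- by exfalso; case: p uv_eq {u_le} => [|p]; case: w {v_le} => [|w]; lia.
- by exists (a - w.+1), (b - p); split; lia.
- by exists w, p.+1; split; lia.
- by exfalso; lia.
Qed.

Theorem proposition4p7 (a b : nat) (u v : int) (i h : nat) :
  1 < a -> a < b -> coprime a b ->
  def_least_sol a b u v ->
  1 <= i <= a - 1 ->
  I_ia a b i h -> (forall x, I_ia a b i x -> h <= x) ->
  forall x, I_ia a b i x <-> exists2 k, k < `|u|%N & x = h + k * a.
Proof.
move=> a_gt1 a_lt_b coprime_ab uv_least _ h_in h_min.
have a_gt0 : 0 < a by lia.
have [t [m [/andP[t_gt0 t_lt_a] tb_eq <-]]] := def_least_sol_minn a_gt1 a_lt_b uv_least.
pose J := i * t %% a.
have J_lt_a : J < a by rewrite ltn_pmod.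
have Jb_i : J * b = i %[mod a].
  by rewrite modnMml; apply: (@eq_modn_addM _ _ _ 0 (i * m)); nia.
exact: (I_ia_progression a_gt0 coprime_ab t_gt0 t_lt_a tb_eq J_lt_a Jb_i h_in h_min).
Qed.
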